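(* Let $G$ be a proper subdomain of $\mathbb{R}^n$, let $c\ge 1$, and let $x,y\in G$. Put $$W(x,y)=\log\Big(1+2c\sinh\frac{j_G(x,y)}{2}\Big),\quad L=\frac12+\frac{\log c}{1+j_G(x,y)},\quad U=\frac{j_G(x,y)+(2c+1)}{2(1+j_G(x,y))}.$$ Then $$L\,j_G(x,y)\le W(x,y)\le U\,j_G(x,y).$$
   Context: For $x\in G$, $d_G(x)=\operatorname{dist}(x,\partial G)$. The distance ratio metric is $j_G(x,y)=\log\Big(1+\frac{|x-y|}{\min\{d_G(x),d_G(y)\}}\Big)$ for $x,y\in G$. *)

(* R^n is modelled as 'rV[R]_n over an abstract
   R : realType, with the Euclidean norm defined explicitly below (the
   library's norm on 'rV is the max norm, which induces the same topology). *)
From mathcomp Require Import all_boot all_order all_algebra.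
From mathcomp Require Import all_classical all_reals all_analysis.
Set Implicit Arguments. Unset Strict Implicit. Unset Printing Implicit Defensive.
Import Order.TTheory GRing.Theory Num.Theory.
Import numFieldNormedType.Exports.
Local Open Scope classical_set_scope.
Local Open Scope ring_scope.

Definition enorm (R : realType) (n : nat) (v : 'rV[R]_n) : R :=
  Num.sqrt (\sum_(i < n) (v ord0 i) ^+ 2).

Definition boundary (R : realType) (n : nat) (G : set 'rV[R]_n) : set 'rV[R]_n :=
  closure G `\` interior G.

Definition dG (R : realType) (n : nat) (G : set 'rV[R]_n) (x : 'rV[R]_n) : R :=
  inf [set enorm (x - z) | z in boundary G].

Definition jG (R : realType) (n : nat) (G : set 'rV[R]_n) (x y : 'rV[R]_n) : R :=
  ln (1 + enorm (x - y) / Num.min (dG G x) (dG G y)).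

Definition sinh (R : realType) (t : R) : R := (expR t - expR (- t)) / 2.

Definition proper_subdomain (R : realType) (n : nat) (G : set 'rV[R]_n) : Prop :=
  G !=set0 /\ open G /\ connected G /\ G != setT.

From mathcomp Require Import all_boot all_order all_algebra.
From mathcomp Require Import all_classical all_reals all_analysis.
From mathcomp Require Import ring lra.
Import Order.TTheory GRing.Theory Num.Theory.
Local Open Scope classical_set_scope.
Local Open Scope ring_scope.

(* With t = j_G(x, y), E = e^(t/2) and a = t / (1 + t), we have
   1 + 2 c sinh(t/2) = 1 + c (E - 1/E), while the two bounds read
   L t = t/2 + a ln c and U t = t/2 + c a.  For the lower bound, concavity of
   ln gives c^a <= a c + 1 - a, and 1 + c (E - 1/E) - E (a c + 1 - a) is affine
   in c, nonnegative at c = 1 and nondecreasing because E^2 >= 1 + t.  For the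
   upper bound, e^(c a) >= e^a (1 + (c - 1) a), which again reduces the claim
   to an affine comparison in c: its value at c = 1 follows from e^s >= 1 + s,
   and its slope from e^t (1 + t - t^2) <= (1 + t)^2. *)

Section ExpBounds.
Variable R : realType.
Implicit Types t a c : R.

Lemma ln_concave_at1 a c : 0 <= a <= 1 -> 0 < c ->
  a * ln c <= ln (a * c + (1 - a)).
Proof.
case/andP=> a0 a1 c0.
have := @concave_ln R (Itv01 a0 a1) c 1 c0 ltr01.
by rewrite !convRE /= ln1 mulr0 addr0 mulr1.
Qed.

Lemma expR_mul1DxBsqr_le t : 0 <= t -> expR t * (1 + t - t ^+ 2) <= (1 + t) ^+ 2.
Proof.
move=> t0; have [neg|pos] := lerP (1 + t - t ^+ 2) 0.
  by apply: le_trans (sqr_ge0 _); rewrite pmulr_rle0 ?expR_gt0.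
(* on [0, 4], e^t <= (1 - t/4)^-4 reduces the claim to a polynomial one *)
have t2 : t <= 2 by nra.
have -> : expR t = expR (t / 4) ^+ 4 by rewrite -expRM_natr; congr expR; field.
set p := expR (t / 4).
have p1 : p * (1 - t / 4) <= 1.
  have : 1 - t / 4 <= expR (- (t / 4)) by apply: expR_ge1Dx.
  by rewrite expRN -(ler_pM2l (expR_gt0 (t / 4))) mulfV ?gt_eqF ?expR_gt0.
have p0 : 0 <= p * (1 - t / 4) by rewrite mulr_ge0 ?expR_ge0 //; lra.
have poly : 1 + t - t ^+ 2 <= (1 - t / 4) ^+ 4 * (1 + t) ^+ 2 by nra.
have p4 : (p * (1 - t / 4)) ^+ 4 <= 1 by rewrite exprn_ile1.
rewrite exprMn in p4.
have := ler_wpM2l (exprn_ge0 4 (expR_ge0 (t / 4))) poly.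
rewrite mulrA; move/le_trans; apply.
by rewrite ler_piMl ?sqr_ge0.
Qed.

Lemma ln_sinh_half_ge t c : 0 <= t -> 1 <= c ->
  t / 2 + t / (1 + t) * ln c <= ln (1 + 2 * c * sinh (t / 2)).
Proof.
move=> t0 c1; have t1_gt0 : 0 < 1 + t by lra.
have c_gt0 : 0 < c by lra.
rewrite /sinh -{1}[t / 2]expRK.
set E := expR (t / 2); set EV := expR (- (t / 2)).
have E_gt0 : 0 < E by apply: expR_gt0.
have EEV : E * EV = 1 by rewrite -expRD subrr expR0.
have EV_le1 : EV <= 1 by rewrite expR_le1 oppr_le0 divr_ge0.
have EE_ge : 1 + t <= E * E by rewrite -expRD -splitr expR_ge1Dx.
set a := t / (1 + t).
have a_mul : a * (1 + t) = t by rewrite /a divfK // gt_eqF.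
clearbody a.
have a01 : 0 <= a <= 1 by apply/andP; split; nra.
have comb_gt0 : 0 < a * c + (1 - a) by nra.
have slope_ge0 : 0 <= E - EV - a * E.
  by rewrite -(pmulr_rge0 _ E_gt0); nra.
apply: le_trans (_ : ln E + ln (a * c + (1 - a)) <= _).
  by rewrite lerD2l; apply: ln_concave_at1.
by rewrite -lnM ?posrE // ler_ln ?posrE //; nra.
Qed.

Lemma ln_sinh_half_le t c : 0 <= t -> 1 <= c ->
  ln (1 + 2 * c * sinh (t / 2)) <= t / 2 + c * (t / (1 + t)).
Proof.
move=> t0 c1; have t1_gt0 : 0 < 1 + t by lra.
set a := t / (1 + t).
have a_mul : a * (1 + t) = t by rewrite /a divfK // gt_eqF.
have -> : t / 2 + c * a = t / 2 + a + (c - 1) * a by ring.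
rewrite /sinh -[X in _ <= X]expRK !expRD.
set E := expR (t / 2); set EV := expR (- (t / 2)).
set F := expR a; set G := expR ((c - 1) * a).
have E_gt0 : 0 < E by apply: expR_gt0.
have EEV : E * EV = 1 by rewrite -expRD subrr expR0.
have E_ge : 1 + t / 2 <= E by apply: expR_ge1Dx.
have EV_ge : 1 - t / 2 <= EV by apply: expR_ge1Dx.
have F_ge : 1 + a <= F by apply: expR_ge1Dx.
have G_ge : 1 + (c - 1) * a <= G by apply: expR_ge1Dx.
have EE_le : E * E * (1 + t - t ^+ 2) <= (1 + t) ^+ 2.
  by rewrite -expRD -splitr expR_mul1DxBsqr_le.
clearbody a.
have a_ge0 : 0 <= a by nra.
have at_c1 : 1 + (E - EV) <= E * (1 + a).
  have : t / 2 <= a * E by nra.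
  nra.
have slope : E - EV <= a * (1 + a) * E.
  have sqr_a : (1 - a - a ^+ 2) * (1 + t) ^+ 2 = 1 + t - t ^+ 2.
    have -> : (1 - a - a ^+ 2) * (1 + t) ^+ 2 =
      (1 + t) ^+ 2 - a * (1 + t) * (1 + t) - (a * (1 + t)) ^+ 2 by ring.
    by rewrite a_mul; ring.
  have EEa_le1 : E * E * (1 - a - a ^+ 2) <= 1.
    by rewrite -(ler_pM2r (exprn_gt0 2 t1_gt0)) -!mulrA sqr_a mul1r mulrA.
  rewrite -subr_ge0 -(pmulr_rge0 _ E_gt0); nra.
have EF_ge : E * (1 + a) <= E * F by rewrite ler_pM2l.
have EV_le_E : EV <= E by nra.
rewrite ler_ln ?posrE; last 2 first.
- by rewrite ltr_pwDl // !mulr_ge0 //; lra.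
- by rewrite !mulr_gt0 ?expR_gt0.
have c1_ge0 : 0 <= c - 1 by lra.
have ca_ge0 : 0 <= (c - 1) * a by rewrite mulr_ge0.
apply: le_trans (_ : E * (1 + a) * (1 + (c - 1) * a) <= _).
  have := ler_wpM2l c1_ge0 slope; nra.
rewrite ler_pM ?mulr_ge0 //; lra.
Qed.

End ExpBounds.

Lemma enorm_ge0 (R : realType) (n : nat) (v : 'rV[R]_n) : 0 <= enorm v.
Proof. exact: sqrtr_ge0. Qed.

Lemma dG_ge0 (R : realType) (n : nat) (G : set 'rV[R]_n) (x : 'rV[R]_n) :
  0 <= dG G x.
Proof.
rewrite /dG; set S := [set _ | _ in _].
have [->|/set0P S_neq0] := eqVneq S set0; first by rewrite inf0.
by apply: lb_le_inf => // _ [z _ <-]; apply: enorm_ge0.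
Qed.

Lemma jG_ge0 (R : realType) (n : nat) (G : set 'rV[R]_n) (x y : 'rV[R]_n) :
  0 <= jG G x y.
Proof.
rewrite /jG ln_ge0 // lerDl divr_ge0 ?enorm_ge0 //.
by rewrite le_min !dG_ge0.
Qed.

Theorem theorem3p10 (R : realType) (n : nat) (G : set 'rV[R]_n) (c : R)
  (x y : 'rV[R]_n) :
  proper_subdomain G -> 1 <= c -> x \in G -> y \in G ->
  let j := jG G x y in
  let W := ln (1 + 2 * c * sinh (j / 2)) in
  let L := 2^-1 + ln c / (1 + j) in
  let U := (j + (2 * c + 1)) / (2 * (1 + j)) in
  L * j <= W /\ W <= U * j.
Proof.
move=> _ c1 _ _ j W L U.
have j_ge0 : 0 <= j by apply: jG_ge0.
have j1_neq0 : 1 + j != 0 by rewrite gt_eqF // ltr_pwDl.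
have -> : L * j = j / 2 + j / (1 + j) * ln c by rewrite /L; field.
have -> : U * j = j / 2 + c * (j / (1 + j)) by rewrite /U; field.
split; [exact: ln_sinh_half_ge | exact: ln_sinh_half_le].
Qed.
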